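(* Let $n\in\mathbb{N}$ and let $c_k\in\mathbb{C}$, $0\le k\le\lfloor (n-1)/3\rfloor$. If $$\Pi\sum_{k=0}^{\lfloor (n-1)/3\rfloor}c_k(z+\overline z)^{n-2k}(z^2-z\overline z+\overline z^2)^k=0,$$ then $c_k=0$ for all $k$.
   Context: Let $\omega=e^{2\pi\mathrm{i}/3}$. For a polynomial $f(z,\overline z)$ in $z$ and $\overline z$ (viewed as a function of $z\in\mathbb{C}$), $\Pi f(z,\overline z):=\frac13\big(2f(z,\overline z)-f(\omega^2z,\omega\overline z)-f(\omega z,\omega^2\overline z)\big)$. *)

From HB Require Import structures.
From mathcomp Require Import all_boot all_order all_algebra.
From mathcomp Require Import complex.
From mathcomp Require Import Rstruct.
Set Implicit Arguments. Unset Strict Implicit. Unset Printing Implicit Defensive.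
Import Order.TTheory GRing.Theory Num.Theory.
Local Open Scope ring_scope.

Definition C : Type := complex Rdefinitions.R.

(* omega = e^{2 pi i / 3} = -1/2 + i sqrt(3)/2 *)
Definition omega : C := Complex (- (1 / 2)) (Num.sqrt 3 / 2).

(* The operator Pi acting on a polynomial f(z, zbar), given as a function
   f : C -> C -> C of (z, zbar), producing a function of z in C:
   Pi f (z) = 1/3 (2 f(z, zbar) - f(w^2 z, w zbar) - f(w z, w^2 zbar)). *)
Definition Pi (f : C -> C -> C) (z : C) : C :=
  (2 * f z (z^*) - f (omega ^+ 2 * z) (omega * z^*)
     - f (omega * z) (omega ^+ 2 * z^*)) / 3.

(* The sum  sum_{k=0}^{floor((n-1)/3)} c_k (z+zb)^(n-2k) (z^2 - z zb + zb^2)^k.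
   The number of indices, floor((n-1)/3) + 1 (with floor(-1/3) = -1 for n = 0),
   equals (n+2) %/ 3 in nat. *)
Definition nidx (n : nat) : nat := (n + 2) %/ 3.

Definition Fsum (n : nat) (c : nat -> C) (z zb : C) : C :=
  \sum_(0 <= k < nidx n) c k * (z + zb) ^+ (n - 2 * k) * (z ^+ 2 - z * zb + zb ^+ 2) ^+ k.

From HB Require Import structures.
From mathcomp Require Import all_boot all_order all_algebra.
From mathcomp Require Import complex Rstruct ring lra zify.
Set Implicit Arguments. Unset Strict Implicit. Unset Printing Implicit Defensive.
Import Order.TTheory GRing.Theory Num.Theory.
Local Open Scope ring_scope.

(* Put t = z + zbar and N = z zbar, so that the k-th summand is
   c_k t^(n-2k) (t^2 - 3N)^k.  The condition Pi f = 0 forces h(z) = f(z, zbar)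
   to be invariant under z |-> omega z.  On the line z = a + i sqrt 3 the norm
   N = a^2 + 3 is the same for z, omega z and omega^2 z, while t equals 2a,
   -(a+3) and 3-a respectively.  Hence the polynomial
   q(a) = sum_k c_k U^(n-2k) (U^2 - 3(a^2+3))^k takes the same value for these
   three linear choices of U.  If K is the largest index with c_K <> 0, every
   term is divisible by U^(n-2K), so q is divisible by (a (a+3) (a-3))^(n-2K);
   q <> 0 because its lowest-order term at a = 0 is c_K 2^(n-2K) (-9)^K.  As
   3K < n, this gives deg q >= 3(n-2K) > n >= deg q, a contradiction. *)

Lemma ltn_nidx n k : (k < nidx n)%N -> (3 * k < n)%N.
Proof. by rewrite /nidx; lia. Qed.

Lemma poly_eq0_nat (R : numDomainType) (p : {poly R}) :
  (forall i : nat, p.[i%:R] = 0) -> p = 0.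
Proof.
move=> p_nat; apply: (@roots_geq_poly_eq0 _ _ [seq i%:R | i <- iota 0 (size p)]).
- by apply/allP => _ /mapP[i _ ->]; apply/eqP/p_nat.
- by rewrite map_inj_uniq ?iota_uniq // => i j /eqP; rewrite eqr_nat => /eqP.
- by rewrite size_map size_iota.
Qed.

Lemma size_polyC_mul_XsubC (R : nzRingType) (l r : R) :
  (size (l%:P * ('X - r%:P))%R <= 2)%N.
Proof.
rewrite (leq_trans (size_polyMleq _ _)) // size_XsubC.
by case: (size _) (size_polyC_leq1 l) => [|[]].
Qed.

Section FormPoly.
Variables (F : fieldType) (n : nat) (c : nat -> F).

Definition Fpoly (U V : {poly F}) : {poly F} :=
  \sum_(0 <= k < nidx n) (c k)%:P * U ^+ (n - 2 * k) * V ^+ k.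

Lemma horner_Fpoly U V x :
  (Fpoly U V).[x] = \sum_(0 <= k < nidx n) c k * U.[x] ^+ (n - 2 * k) * V.[x] ^+ k.
Proof. by rewrite horner_sum; apply: eq_bigr => k _; rewrite !hornerE. Qed.

Lemma size_Fpoly (U V : {poly F}) :
  (size U <= 2)%N -> (size V <= 3)%N -> (size (Fpoly U V) <= n.+1)%N.
Proof.
move=> sU sV; rewrite /Fpoly big_nat_cond.
apply: (big_ind (fun p : {poly F} => size p <= n.+1)%N) => [|p q sp sq|k].
- by rewrite size_poly0.
- by rewrite (leq_trans (size_polyD _ _)) // geq_max sp sq.
case/andP=> /andP[_ /ltn_nidx lt3k] _.
have := size_polyMleq ((c k)%:P * U ^+ (n - 2 * k)) (V ^+ k).
have := size_polyMleq (c k)%:P (U ^+ (n - 2 * k)).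
have := size_polyC_leq1 (c k).
have := size_poly_exp_leq U (n - 2 * k).
have := size_poly_exp_leq V k.
nia.
Qed.

Section TopCoefficient.
Variable K : nat.
Hypotheses (ltK : (K < nidx n)%N) (cK : c K != 0)
  (maxK : forall j, (j < nidx n)%N -> c j != 0 -> (j <= K)%N).
Let m := (n - 2 * K)%N.

Lemma Fpoly_factor l (d V : {poly F}) :
  Fpoly (l%:P * d) V = d ^+ m *
    \sum_(0 <= j < nidx n) (c j * l ^+ (n - 2 * j))%:P * d ^+ (n - 2 * j - m) * V ^+ j.
Proof.
rewrite /Fpoly big_distrr /=; apply: eq_big_nat => j /andP[_ ltj].
have [->|cj] := eqVneq (c j) 0; first by rewrite !mul0r mulr0.
have le_m : (m <= n - 2 * j)%N by have := maxK ltj cj; rewrite /m; lia.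
have -> : (l%:P * d) ^+ (n - 2 * j) = l%:P ^+ (n - 2 * j) * d ^+ (n - 2 * j - m) * d ^+ m.
  by rewrite exprMn -mulrA -exprD subnK.
by rewrite polyCM polyC_exp; ring.
Qed.

Lemma Fpoly_XsubC_neq0 (l r : F) (V : {poly F}) :
  l != 0 -> V.[r] != 0 -> Fpoly (l%:P * ('X - r%:P)) V != 0.
Proof.
move=> l0 Vr0; rewrite Fpoly_factor mulf_neq0 ?expf_neq0 ?polyXsubC_eq0 //.
set s := \sum_(_ <= _ < _) _.
have sr : s.[r] = c K * l ^+ m * V.[r] ^+ K.
  rewrite horner_sum (bigD1_seq K) ?mem_index_iota ?iota_uniq //= big1_seq ?addr0 => [|j].
    by rewrite !hornerE subnn expr0 mulr1.
  rewrite mem_index_iota => /andP[jK /andP[_ ltj]].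
  have [->|cj] := eqVneq (c j) 0; first by rewrite !hornerE.
  have ltjK : (j < K)%N by rewrite ltn_neqAle jK maxK.
  have e_pos : (0 < n - 2 * j - m)%N by have := ltn_nidx ltK; rewrite /m; lia.
  by rewrite !hornerE subrr expr0n eqn0Ngt e_pos mulr0 mul0r.
have : s.[r] != 0 by rewrite sr !mulf_neq0 ?expf_neq0.
by apply: contraNneq => ->; rewrite horner0.
Qed.

Lemma Fpoly_three_roots_false (l0 l1 l2 r0 r1 r2 : F) (V0 V1 V2 : {poly F}) :
  l0 != 0 -> V0.[r0] != 0 -> (size V0 <= 3)%N ->
  r0 != r1 -> r0 != r2 -> r1 != r2 ->
  Fpoly (l0%:P * ('X - r0%:P)) V0 = Fpoly (l1%:P * ('X - r1%:P)) V1 ->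
  Fpoly (l0%:P * ('X - r0%:P)) V0 = Fpoly (l2%:P * ('X - r2%:P)) V2 -> False.
Proof.
move=> l0_neq0 V0r0 sV0 r01 r02 r12 e1 e2.
set q := Fpoly _ V0 in e1 e2.
have dvd_q l r V : Fpoly (l%:P * ('X - r%:P)) V = q -> ('X - r%:P) ^+ m %| q.
  by move<-; rewrite Fpoly_factor dvdp_mulr.
have cop (r r' : F) : r != r' -> coprimep (('X - r%:P) ^+ m) (('X - r'%:P) ^+ m).
  by move=> ne; rewrite coprimep_expl // coprimep_expr // coprimep_XsubC2 // subr_eq0 eq_sym.
have dvd3 : ('X - r0%:P) ^+ m * ('X - r1%:P) ^+ m * ('X - r2%:P) ^+ m %| q.
  by rewrite !Gauss_dvdp ?coprimepMl ?cop // (dvd_q l0 _ V0) // (dvd_q l1 _ V1) // (dvd_q l2 _ V2).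
have := dvdp_leq (Fpoly_XsubC_neq0 l0_neq0 V0r0) dvd3.
rewrite !size_mul ?mulf_neq0 ?expf_neq0 ?polyXsubC_eq0 // !size_exp_XsubC.
have := size_Fpoly (size_polyC_mul_XsubC l0 r0) sV0; have := ltn_nidx ltK; rewrite /m.
move=> lt3K sq /leq_trans/(_ sq); lia.
Qed.

End TopCoefficient.

Lemma Fpoly_three_roots_coef_eq0 (l0 l1 l2 r0 r1 r2 : F) (V0 V1 V2 : {poly F}) :
  l0 != 0 -> V0.[r0] != 0 -> (size V0 <= 3)%N ->
  r0 != r1 -> r0 != r2 -> r1 != r2 ->
  Fpoly (l0%:P * ('X - r0%:P)) V0 = Fpoly (l1%:P * ('X - r1%:P)) V1 ->
  Fpoly (l0%:P * ('X - r0%:P)) V0 = Fpoly (l2%:P * ('X - r2%:P)) V2 ->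
  forall k, (k < nidx n)%N -> c k = 0.
Proof.
move=> l0_neq0 V0r0 sV0 r01 r02 r12 e1 e2 k ltk; apply/eqP/negPn/negP => ck.
have exK : exists j, (j < nidx n)%N && (c j != 0) by exists k; rewrite ltk.
have ubK j : (j < nidx n)%N && (c j != 0) -> (j <= nidx n)%N by case/andP=> /ltnW.
have [K /andP[ltK cK] maxK] := ex_maxnP exK ubK.
apply: (Fpoly_three_roots_false ltK cK _ l0_neq0 V0r0 sV0 r01 r02 r12 e1 e2).
by move=> j ltj cj; apply: maxK; rewrite ltj.
Qed.

End FormPoly.

Local Notation R := Rdefinitions.R.

Lemma rotation_invariant (F : numDomainType) (w : F) (h : F -> F) :
  w ^+ 3 = 1 -> (forall z, 2 * h z = h (w ^+ 2 * z) + h (w * z)) ->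
  forall z, h (w * z) = h z.
Proof.
move=> w3 hE z; apply: (mulfI (_ : 3 != 0)); first by rewrite pnatr_eq0.
have := hE (w * z); rewrite mulrA -exprSr w3 mul1r mulrA -expr2 => hEw.
apply/eqP; rewrite -subr_eq0.
have -> : 3 * h (w * z) - 3 * h z
          = (2 * h (w * z) - (h z + h (w ^+ 2 * z))) - (2 * h z - (h (w ^+ 2 * z) + h (w * z))).
  by ring.
by rewrite hEw hE !subrr.
Qed.

Lemma sqrt3_sqr : Num.sqrt 3 ^+ 2 = 3 :> R.
Proof. by rewrite sqr_sqrtr // ler0n. Qed.

Lemma omega_sqr : omega ^+ 2 = omega^*.
Proof.
have s3 := sqrt3_sqr.
by rewrite expr2 /omega; simpc; congr Complex; [nra | field].
Qed.

Lemma omega_mul_conj : omega * omega^* = 1.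
Proof.
have s3 := sqrt3_sqr.
by rewrite /omega; simpc; congr Complex; [nra | field].
Qed.

Lemma omega_cube : omega ^+ 3 = 1.
Proof. by rewrite exprS omega_sqr omega_mul_conj. Qed.

Lemma omega_sqr_mul_conj : omega ^+ 2 * (omega ^+ 2)^* = 1.
Proof. by rewrite rmorphXn -exprMn omega_mul_conj expr1n. Qed.

Lemma mul_conj_unit (w z : C) :
  w * w^* = 1 -> (w * z) * (w * z)^* = z * z^*.
Proof. by move=> ww; rewrite rmorphM mulrACA ww mul1r. Qed.

Lemma conj_omega_mul (z : C) : (omega * z)^* = omega ^+ 2 * z^*.
Proof. by rewrite rmorphM omega_sqr. Qed.

Lemma conj_omega_sqr_mul (z : C) : (omega ^+ 2 * z)^* = omega * z^*.
Proof. by apply: (can_inj conjCK); rewrite conjCK conj_omega_mul conjCK. Qed.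

Lemma Pi_eq0_invariant (f : C -> C -> C) :
  (forall z, Pi f z = 0) -> forall z, f (omega * z) (omega * z)^* = f z z^*.
Proof.
move=> Pi0; apply: (@rotation_invariant _ omega (fun z => f z z^*) omega_cube) => z /=.
rewrite conj_omega_mul conj_omega_sqr_mul.
have /eqP := Pi0 z; rewrite /Pi mulf_eq0 invr_eq0 pnatr_eq0 orbF subr_eq0 subr_eq.
by rewrite addrC => /eqP.
Qed.

Definition line_point (a : R) : C := Complex a (Num.sqrt 3).

Lemma norm_line_point a : line_point a * (line_point a)^* = (a%:C)%C ^+ 2 + 3.
Proof.
have s3 := sqrt3_sqr.
by rewrite /line_point; simpc; congr Complex; [nra | ring].
Qed.

Lemma trace_line_point a : line_point a + (line_point a)^* = 2 * (a%:C)%C.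
Proof. by rewrite /line_point; simpc; congr Complex; ring. Qed.

Lemma trace_omega_line_point a :
  omega * line_point a + (omega * line_point a)^* = - ((a%:C)%C + 3).
Proof.
have s3 := sqrt3_sqr.
by rewrite /omega /line_point; simpc; congr Complex; nra.
Qed.

Lemma trace_omega_sqr_line_point a :
  omega ^+ 2 * line_point a + (omega ^+ 2 * line_point a)^* = 3 - (a%:C)%C.
Proof.
have s3 := sqrt3_sqr.
by rewrite omega_sqr /omega /line_point; simpc; congr Complex; nra.
Qed.

Definition line_poly n (c : nat -> C) (U : {poly C}) : {poly C} :=
  Fpoly n c U (U ^+ 2 - 3%:P * ('X^2 + 3%:P)).

Lemma size_line_poly_snd (U : {poly C}) :
  (size U <= 2)%N -> (size (U ^+ 2 - 3%:P * ('X^2 + 3%:P))%R <= 3)%N.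
Proof.
move=> sU; rewrite (leq_trans (size_polyD _ _)) // geq_max size_polyN.
apply/andP; split; first by rewrite (leq_trans (size_poly_exp_leq _ _)) //; lia.
by rewrite (leq_trans (size_polyMleq _ _)) // size_XnaddC // size_polyC; case: (_ != 0).
Qed.

Lemma Fsum_line_point n c U z a :
  z * z^* = (a%:C)%C ^+ 2 + 3 -> U.[(a%:C)%C] = z + z^* ->
  Fsum n c z z^* = (line_poly n c U).[(a%:C)%C].
Proof.
move=> zz hU; rewrite horner_Fpoly /Fsum; apply: eq_bigr => k _.
rewrite hornerD hornerN hornerCM hornerD hornerC hornerXn horner_exp hU -zz.
by congr (_ * _ ^+ _); ring.
Qed.

Lemma line_poly_eq n c (U U' : {poly C}) (w : C) :
  w * w^* = 1 -> (forall z, Fsum n c (w * z) (w * z)^* = Fsum n c z z^*) ->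
  (forall a, U.[(a%:C)%C] = line_point a + (line_point a)^*) ->
  (forall a, U'.[(a%:C)%C] = w * line_point a + (w * line_point a)^*) ->
  line_poly n c U = line_poly n c U'.
Proof.
move=> ww inv hU hU'; apply/eqP; rewrite -subr_eq0; apply/eqP/poly_eq0_nat => i.
rewrite -(rmorph_nat (real_complex R)) hornerD hornerN.
rewrite -(Fsum_line_point _ _ (norm_line_point _) (hU _)).
rewrite -(Fsum_line_point _ _ _ (hU' _)) ?mul_conj_unit ?norm_line_point //.
by rewrite inv subrr.
Qed.

Theorem proposition21 (n : nat) (c : nat -> C) :
  (forall z : C, Pi (Fsum n c) z = 0) ->
  forall k : nat, (k < nidx n)%N -> c k = 0.
Proof.
move=> Pi0.
have inv1 := Pi_eq0_invariant Pi0.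
have inv2 z : Fsum n c (omega ^+ 2 * z) (omega ^+ 2 * z)^* = Fsum n c z z^*.
  by rewrite expr2 -mulrA !inv1.
have U0_line a : (2%:P * ('X - 0%:P)).[(a%:C)%C] = line_point a + (line_point a)^*.
  by rewrite !hornerE trace_line_point subr0.
have U1_line a :
    ((-1)%:P * ('X - (-3)%:P)).[(a%:C)%C] = omega * line_point a + (omega * line_point a)^*.
  by rewrite !hornerE trace_omega_line_point; ring.
have U2_line a :
    ((-1)%:P * ('X - 3%:P)).[(a%:C)%C] = omega ^+ 2 * line_point a + (omega ^+ 2 * line_point a)^*.
  by rewrite !hornerE trace_omega_sqr_line_point; ring.
apply: (Fpoly_three_roots_coef_eq0 _ _ _ _ _ _
         (line_poly_eq omega_mul_conj inv1 U0_line U1_line)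
         (line_poly_eq omega_sqr_mul_conj inv2 U0_line U2_line)).
- by rewrite pnatr_eq0.
- rewrite hornerD hornerN horner_exp !hornerCM hornerXsubC hornerD hornerXn hornerC.
  by rewrite subrr mulr0 !expr0n /= !add0r oppr_eq0 -natrM pnatr_eq0.
- exact: size_line_poly_snd (size_polyC_mul_XsubC _ _).
- by rewrite eq_sym oppr_eq0 pnatr_eq0.
- by rewrite eq_sym pnatr_eq0.
- by rewrite -subr_eq0 -opprD oppr_eq0 -natrD pnatr_eq0.
Qed.
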